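(* Let $A\in\mathbb{R}^{m\times n}$, let $T$ be an ordered subset of $r$ elements of $\{1,\dots,n\}$, and let $\hat A:=A[:,T]$ be the $m\times r$ submatrix of $A$ formed by the columns $T$, with $\mathrm{rank}(\hat A)=r$. Let $E:=\mathrm{sign}(\hat A^+)\in\mathbb{R}^{r\times m}$. Then there exist a matrix $W\in\mathbb{R}^{m\times n}$ and a skew-symmetric matrix $U\in\mathbb{R}^{m\times m}$ such that $\hat A^\top W A^\top+\hat A^\top U=E$ and $\langle A,W\rangle=\|\hat A^+\|_1$.
   Context: $\hat A^+$ is the Moore–Penrose pseudoinverse of $\hat A$. $\mathrm{sign}$ is applied entrywise, with $\mathrm{sign}(x)=x/|x|$ for $x\ne 0$ and $\mathrm{sign}(0)=0$. $\langle X,Y\rangle=\mathrm{trace}(X^\top Y)=\sum_{ij}x_{ij}y_{ij}$, and $\|H\|_1=\sum_{i,j}|H_{ij}|$. *)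

From HB Require Import structures.
From mathcomp Require Import all_boot all_order all_algebra.
From mathcomp Require Import reals.
Set Implicit Arguments. Unset Strict Implicit. Unset Printing Implicit Defensive.
Import Order.TTheory GRing.Theory Num.Theory.
Local Open Scope ring_scope.

Definition is_MP_pinv (R : realType) (m n : nat)
  (A : 'M[R]_(m, n)) (X : 'M[R]_(n, m)) : Prop :=
  [/\ A *m X *m A = A,
      X *m A *m X = X,
      (A *m X)^T = A *m X &
      (X *m A)^T = X *m A].

Definition sgn (R : realType) (x : R) : R := if x == 0 then 0 else x / `|x|.

Definition sign_mx (R : realType) (m n : nat) (A : 'M[R]_(m, n)) : 'M[R]_(m, n) :=
  map_mx (@sgn R) A.

Definition frob_inner (R : realType) (m n : nat) (X Y : 'M[R]_(m, n)) : R :=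
  \sum_(i < m) \sum_(j < n) X i j * Y i j.

Definition entry_l1 (R : realType) (m n : nat) (H : 'M[R]_(m, n)) : R :=
  \sum_(i < m) \sum_(j < n) `|H i j|.

(* A[:,T] for an ordered index selection t : 'I_r -> 'I_n *)
Definition col_sub (R : realType) (m n r : nat) (A : 'M[R]_(m, n))
  (t : 'I_r -> 'I_n) : 'M[R]_(m, r) :=
  \matrix_(i < m, j < r) A i (t j).

(* Write B := A[:,T] and E := sign(B^+).  Full column rank gives B^+ B = 1, and
   S := the 0/1 matrix selecting the columns T satisfies B = A S^T.  Split
   E = E B B^+ + F with F := E - E B B^+, so that F B = 0.  The matrix
   W := (B^+)^T E (B^+)^T S gives B^T W A^T = (B^+ B)^T E (B B^+)^T = E B B^+,
   and the skew-symmetric U := (B^+)^T F - F^T B^+ gives B^T U = F.  Moving S and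
   the factors of W across the Frobenius product,
   <A, W> = <B^+ B B^+, E> = <B^+, sign(B^+)> = |B^+|_1. *)
From HB Require Import structures.
From mathcomp Require Import all_boot all_order all_algebra.
From mathcomp Require Import reals.
Import Order.TTheory GRing.Theory Num.Theory.
Local Open Scope ring_scope.

Definition col_sel_mx (R : pzRingType) {r n : nat} (t : 'I_r -> 'I_n) : 'M[R]_(r, n) :=
  \matrix_(j, k) (t j == k)%:R.

Lemma col_subE (R : realType) (m n r : nat) (A : 'M[R]_(m, n)) (t : 'I_r -> 'I_n) :
  col_sub A t = A *m (col_sel_mx R t)^T.
Proof.
apply/matrixP => i j; rewrite !mxE (bigD1 (t j)) //= big1 => [|k /negbTE tjk].
  by rewrite !mxE eqxx mulr1 addr0.
by rewrite !mxE eq_sym tjk mulr0.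
Qed.

Lemma frob_innerE (R : realType) (m n : nat) (X Y : 'M[R]_(m, n)) :
  frob_inner X Y = \tr (X^T *m Y).
Proof.
rewrite /frob_inner /mxtrace exchange_big; apply: eq_bigr => j _.
by rewrite !mxE; apply: eq_bigr => i _; rewrite mxE.
Qed.

Lemma frob_inner_mulmxr (R : realType) (m n p : nat)
    (A : 'M[R]_(m, n)) (X : 'M[R]_(m, p)) (S : 'M[R]_(p, n)) :
  frob_inner A (X *m S) = frob_inner (A *m S^T) X.
Proof.
by rewrite !frob_innerE mulmxA mxtrace_mulC mulmxA trmx_mul trmxK.
Qed.

Lemma frob_inner_mulmxl (R : realType) (m n p : nat)
    (X : 'M[R]_(m, n)) (P : 'M[R]_(m, p)) (Y : 'M[R]_(p, n)) :
  frob_inner X (P *m Y) = frob_inner (P^T *m X) Y.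
Proof. by rewrite !frob_innerE trmx_mul trmxK mulmxA. Qed.

Lemma entry_l1E (R : realType) (m n : nat) (X : 'M[R]_(m, n)) :
  entry_l1 X = frob_inner X (sign_mx X).
Proof.
apply: eq_bigr => i _; apply: eq_bigr => j _; rewrite mxE /sgn.
have [->|Xij_neq0] := eqVneq (X i j) 0; first by rewrite normr0 mulr0.
by rewrite mulrA -expr2 -real_normK ?num_real // expr2 mulfK ?normr_eq0.
Qed.

Lemma row_full_pinv_mulmx (F : fieldType) (m r : nat)
    (B : 'M[F]_(m, r)) (X : 'M[F]_(r, m)) :
  row_full B -> B *m X *m B = B -> X *m B = 1%:M.
Proof. by move=> /row_full_inj B_inj BXB; apply: B_inj; rewrite mulmxA BXB mulmx1. Qed.

Lemma trmx_skew_part (R : pzRingType) (n : nat) (M : 'M[R]_n) :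
  (M - M^T)^T = - (M - M^T).
Proof. by rewrite linearB /= trmxK opprB. Qed.

Lemma mulmx_skew_part (R : comPzRingType) (m r : nat)
    (B : 'M[R]_(m, r)) (Y F : 'M[R]_(r, m)) :
  Y *m B = 1%:M -> F *m B = 0 ->
  B^T *m (Y^T *m F - (Y^T *m F)^T) = F.
Proof.
move=> YB FB; rewrite mulmxBr trmx_mul trmxK !mulmxA -!trmx_mul YB FB.
by rewrite trmx1 trmx0 mul1mx mul0mx subr0.
Qed.

Theorem lemma3p6 (R : realType) (m n r : nat) (A : 'M[R]_(m, n))
  (t : 'I_r -> 'I_n) (Ap : 'M[R]_(r, m)) :
  injective t ->
  \rank (col_sub A t) = r ->
  is_MP_pinv (col_sub A t) Ap ->
  exists (W : 'M[R]_(m, n)) (U : 'M[R]_m),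
    U^T = - U /\
    (col_sub A t)^T *m W *m A^T + (col_sub A t)^T *m U = sign_mx Ap /\
    frob_inner A W = entry_l1 Ap.
Proof.
move=> _ rankB [BApB ApBAp BAp_sym _].
set B := col_sub A t in rankB BApB ApBAp BAp_sym *; set E := sign_mx Ap.
have ApB : Ap *m B = 1%:M by apply: row_full_pinv_mulmx; rewrite // /row_full rankB.
have BApE : B = A *m (col_sel_mx R t)^T by rewrite /B col_subE.
have BtE : B^T = col_sel_mx R t *m A^T by rewrite BApE trmx_mul trmxK.
pose F := E - E *m B *m Ap.
have FB : F *m B = 0 by rewrite mulmxBl -!mulmxA ApB mulmx1 subrr.
exists (Ap^T *m E *m Ap^T *m col_sel_mx R t), (Ap^T *m F - (Ap^T *m F)^T).
split; first exact: trmx_skew_part.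
split.
  rewrite mulmx_skew_part // -!mulmxA -BtE !mulmxA -trmx_mul ApB trmx1 mul1mx.
  by rewrite -mulmxA -trmx_mul BAp_sym mulmxA /F addrC subrK.
rewrite frob_inner_mulmxr -BApE frob_inner_mulmxr frob_inner_mulmxl trmxK.
by rewrite mulmxA ApBAp entry_l1E /E.
Qed.
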